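(* The class of data languages accepted by SAFA is not closed under reversal: there exists a data language $L$ accepted by some SAFA such that no SAFA accepts $L^R=\{(a_n,d_n)\cdots(a_1,d_1): (a_1,d_1)\cdots(a_n,d_n)\in L\}$.
   Context: $D$ is a fixed countably infinite set of data values; for a finite alphabet $\Sigma$, data words are elements of $(\Sigma\times D)^*$. A set augmented finite automaton (SAFA) is a tuple $M=(Q,\Sigma\times D,q_0,F,H,\delta)$: $Q$ finite set of states, $q_0\in Q$ initial, $F\subseteq Q$ final, $H=\{h_1,\dots,h_m\}$ a finite collection of (names of) sets of data values, $\delta\subseteq Q\times\Sigma\times C\times OP\times Q$ with $C=\{p(h_i),\,!p(h_i): h_i\in H\}$, $OP=\{-\}\cup\{\mathsf{ins}(h_i):h_i\in H\}$. Configurations are $(q,\langle S_1,\dots,S_m\rangle)$ with $S_i\subseteq D$ finite; initially state $q_0$ and all sets empty. On reading $(a,d)$, a transition $(q,a,\alpha,op,q')$ from the current state may be taken if $\alpha=p(h_i)$ and $d\in S_i$, or $\alpha=\,!p(h_i)$ and $d\notin S_i$; then the state becomes $q'$ and if $op=\mathsf{ins}(h_j)$ the value $d$ is added to $S_j$ ($op=-$ changes nothing). A word is accepted if some run reads it entirely and ends in $F$; $L(M)$ is the set of accepted words. *)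

From mathcomp Require Import all_boot.
Set Implicit Arguments. Unset Strict Implicit. Unset Printing Implicit Defensive.

(* The fixed countably infinite set D of data values is taken to be nat. *)
Definition data := nat.

Definition dword (Sigma : finType) := seq (Sigma * data).

Definition dlang (Sigma : finType) := dword Sigma -> Prop.

(* H = {h_0, ..., h_(nsets-1)} is represented by the index type 'I_nsets.
   A condition p(h_i) is (true, i); !p(h_i) is (false, i).
   An operation '-' is None, ins(h_j) is Some j. *)
Record safa (Sigma : finType) := Safa {
  st : finType;
  q0 : st;
  final : pred st;
  nsets : nat;
  delta : seq (st * Sigma * (bool * 'I_nsets) * option 'I_nsets * st)
}.

Definition config (Sigma : finType) (M : safa Sigma) :=
  (st M * ('I_(nsets M) -> seq data))%type.

Definition init_config (Sigma : finType) (M : safa Sigma) : config M :=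
  (q0 M, fun _ => [::]).

Definition step (Sigma : finType) (M : safa Sigma) (c : config M)
    (x : Sigma * data) (c' : config M) : Prop :=
  exists (q' : st M) (b : bool) (i : 'I_(nsets M)) (op : option 'I_(nsets M)),
    (c.1, x.1, (b, i), op, q') \in delta M /\
    (x.2 \in c.2 i) = b /\
    c' = (q', fun j => if op == Some j then x.2 :: c.2 j else c.2 j).

Fixpoint accepts_from (Sigma : finType) (M : safa Sigma) (c : config M)
    (w : dword Sigma) : Prop :=
  match w with
  | [::] => final c.1
  | x :: w' => exists c' : config M, @step Sigma M c x c' /\ @accepts_from Sigma M c' w'
  end.

Definition lang (Sigma : finType) (M : safa Sigma) : dlang Sigma :=
  fun w => @accepts_from Sigma M (init_config M) w.

Definition rev_lang (Sigma : finType) (L : dlang Sigma) : dlang Sigma :=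
  fun w => L (rev w).

(* Let L be the set of words over {a, b} in which the data value of every b
   already occurs at some earlier a; one set suffices to accept it.  A SAFA
   with n states accepting the reversal must accept b(0)...b(n-1) a(0)...a(n-1).
   Along the a-block of an accepting run some state repeats, and since the data
   values there are pairwise distinct, the sets at the two occurrences agree on
   every value read afterwards, so the loop can be cut out.  The shortened word
   still has b(d) for the value d of a removed a, but no a(d) after it. *)

From mathcomp Require Import all_boot.
Set Implicit Arguments. Unset Strict Implicit. Unset Printing Implicit Defensive.

Section Runs.

Variables (Sigma : finType) (M : safa Sigma).

Fixpoint reaches (c : config M) (u : dword Sigma) (c' : config M) : Prop :=
  if u is x :: u' then exists c1, step c x c1 /\ reaches c1 u' c' else c = c'.

Lemma accepts_from_cat (c : config M) u v :
  accepts_from c (u ++ v) <->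
  exists2 c' : config M, reaches c u c' & accepts_from c' v.
Proof.
elim: u c => [|x u IH] c /=; first by split=> [Hv | [c' -> //]]; exists c.
split=> [[c1 [Hs /IH [c' Hu Hv]]] | [c' [c1 [Hs Hu]] Hv]].
- by exists c'=> //; exists c1.
- by exists c1; split=> //; apply/IH; exists c'.
Qed.

Lemma reaches_mem_fresh (c c' : config M) y d i :
  reaches c y c' -> d \notin map snd y -> (d \in c'.2 i) = (d \in c.2 i).
Proof.
elim: y c => [|x y IH] c /=; first by move->.
case=> c1 [[q' [b [j [op [_ [_ ->]]]]]] Hy].
rewrite inE negb_or => /andP[dx dy].
rewrite (IH _ Hy dy) /=; case: (op == Some i) => //.
by rewrite inE (negbTE dx).
Qed.

Lemma accepts_from_agree (c c' : config M) z :
  c.1 = c'.1 -> {in map snd z, forall d i, (d \in c.2 i) = (d \in c'.2 i)} ->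
  accepts_from c z -> accepts_from c' z.
Proof.
elim: z c c' => [|x z IH] c c' /= Eq Ez; first by rewrite Eq.
case=> c1 [[q' [b [i [op [Hd [Hb ->]]]]]] Hz].
exists (q', fun j => if op == Some j then x.2 :: c'.2 j else c'.2 j); split.
  by exists q', b, i, op; rewrite -Eq -Ez ?mem_head.
apply: IH Hz => // d dz j /=.
have dxz : d \in map snd (x :: z) by rewrite inE dz orbT.
by case: (op == Some j); rewrite ?inE Ez.
Qed.

(* [U] is the set of states not yet visited before [c]: the run either returns
   to a state it has seen, or it enters the complement of [U]. *)
Lemma accepts_from_loop_within (U : {set st M}) (c : config M) u :
  accepts_from c u -> c.1 \in U -> #|U| <= size u ->
  (exists x y z, [/\ u = x ++ y ++ z, y != [::] &
     exists cx cy, [/\ reaches c x cx, reaches cx y cy, cx.1 = cy.1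
                     & accepts_from cy z]])
  \/ exists x z cx, [/\ u = x ++ z, reaches c x cx, cx.1 \notin U
                      & accepts_from cx z].
Proof.
elim: u c U => [|a u IH] c U /=.
  by move=> _ cU; rewrite leqn0 => /eqP/card0_eq/(_ c.1); rewrite cU.
case=> c1 [Hs Hu] cU; rewrite (cardsD1 c.1) cU ltnS => sizeU.
have [Ec1 | Nc1] := eqVneq c1.1 c.1.
  left; exists [::], [:: a], u; split=> //.
  by exists c, c1; split=> //; exists c1.
have [c1U | c1U] := boolP (c1.1 \in U); last first.
  by right; exists [:: a], u, c1; split=> //; exists c1.
have c1U' : c1.1 \in U :\ c.1 by rewrite !inE Nc1.
case: (IH c1 _ Hu c1U' sizeU) => [[x [y [z [-> y0 [cx [cy [Hx Hy E Hz]]]]]]]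
                                  | [x [z [cx [-> Hx cxU Hz]]]]].
  left; exists (a :: x), y, z; split=> //.
  by exists cx, cy; split=> //; exists c1.
have [Ecx | Ncx] := eqVneq cx.1 c.1.
  left; exists [::], (a :: x), z; split=> //.
  by exists c, cx; split=> //; exists c1.
right; exists (a :: x), z, cx; split=> //; first by exists c1.
by rewrite !inE Ncx in cxU.
Qed.

Lemma accepts_from_loop (c : config M) u :
  accepts_from c u -> #|st M| <= size u ->
  exists x y z, [/\ u = x ++ y ++ z, y != [::] &
    exists cx cy, [/\ reaches c x cx, reaches cx y cy, cx.1 = cy.1
                    & accepts_from cy z]].
Proof.
move=> Hu; rewrite -cardsT => sizeU.
have [// | [x [z [cx [_ _]]]]] :=
  accepts_from_loop_within Hu (in_setT c.1) sizeU.
by rewrite in_setT.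
Qed.

Lemma notin_uniq_cat_mid (T : eqType) (s1 s2 s3 : seq T) d :
  uniq (s1 ++ s2 ++ s3) -> d \in s2 -> d \notin s1 ++ s3.
Proof.
rewrite uniq_catCA cat_uniq => /and3P[_ /hasPn s2_out _] ds2.
by apply/negP => /s2_out; rewrite ds2.
Qed.

Lemma accepts_from_pump (c : config M) u :
  accepts_from c u -> uniq (map snd u) -> #|st M| <= size u ->
  exists x y z, [/\ u = x ++ y ++ z, y != [::] & accepts_from c (x ++ z)].
Proof.
move=> Hu uniq_u /(accepts_from_loop Hu).
case=> x [y [z [Eu y0 [cx [cy [Hx Hy E Hz]]]]]].
exists x, y, z; split=> //; apply/accepts_from_cat; exists cx => //.
apply: accepts_from_agree Hz => // d dz i; rewrite (reaches_mem_fresh _ Hy) //.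
apply: contraL dz => dy; move: uniq_u; rewrite Eu !map_cat.
by move=> /notin_uniq_cat_mid /(_ dy); rewrite mem_cat negb_or => /andP[].
Qed.

End Runs.

(* The letter [true] stands for a, which inserts its data value into the single
   set; [false] stands for b, which requires its data value to be in the set. *)
Definition ab_safa : safa bool :=
  @Safa bool unit tt predT 1
    [:: (tt, true, (true, ord0), Some ord0, tt);
        (tt, true, (false, ord0), Some ord0, tt);
        (tt, false, (true, ord0), None, tt)].

Fixpoint b_data_seen (S : seq data) (w : dword bool) : bool :=
  if w is (a, d) :: w' then
    (a || (d \in S)) && b_data_seen (if a then d :: S else S) w'
  else true.

Lemma ab_safa_step (c c' : config ab_safa) a d :
  step c (a, d) c' ->
  (a || (d \in c.2 ord0)) /\ c'.2 ord0 = if a then d :: c.2 ord0 else c.2 ord0.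
Proof.
case=> q' [b [i [op [Hd [Hb ->]]]]] /=; move: Hd Hb; rewrite (ord1 i) !inE.
by case: a b op => [] [] [j|] //=; rewrite (ord1 j) eqxx.
Qed.

Lemma ab_safa_step_exists (c : config ab_safa) a d :
  a || (d \in c.2 ord0) ->
  exists c', step c (a, d) c' /\
             c'.2 ord0 = if a then d :: c.2 ord0 else c.2 ord0.
Proof.
case: c => [[] s] /= Had.
exists (tt, fun j => if (if a then Some ord0 else None) == Some j
                    then d :: s j else s j); split; last by case: a {Had}.
exists tt, (d \in s ord0), ord0, (if a then Some ord0 else None); split=> //.
by case: a Had => /= [_ | ->]; case: (d \in s ord0).
Qed.

Lemma accepts_from_ab_safa (c : config ab_safa) w :
  accepts_from c w <-> b_data_seen (c.2 ord0) w.
Proof.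
elim: w c => [|[a d] w IH] c //=.
split=> [[c' [/ab_safa_step [Had Ec'] /IH]] | /andP[Had Hw]].
  by rewrite Had Ec'.
have [c' [Hs Ec']] := ab_safa_step_exists Had.
by exists c'; split=> //; apply/IH; rewrite Ec'.
Qed.

Lemma lang_ab_safa w : lang ab_safa w <-> b_data_seen [::] w.
Proof. exact: accepts_from_ab_safa. Qed.

Lemma b_data_seen_blocks S l l' :
  {subset l' <= l ++ S} ->
  b_data_seen S (map (pair true) l ++ map (pair false) l').
Proof.
elim: l S => [|d l IH] S /= Hl'; last first.
  by apply: IH => e /Hl'; rewrite !(inE, mem_cat) orbCA.
elim: l' Hl' => //= e l' IHl' Hl'.
by rewrite Hl' ?mem_head ?IHl' // => f fl'; rewrite Hl' // inE fl' orbT.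
Qed.

Lemma b_data_seen_mem S w d :
  b_data_seen S w -> (false, d) \in w -> (d \in S) || ((true, d) \in w).
Proof.
elim: w S => [|[a e] w IH] S //=; rewrite !inE.
case/andP=> Hae Hw /orP[/eqP[Ea Ee] | /(IH _ Hw)].
  by move: Hae; rewrite -Ea -Ee /= => ->.
case: a {Hae Hw} => /=; last by case/orP=> ->; rewrite ?orbT.
by rewrite inE => /orP[/orP[/eqP -> | ->] | ->]; rewrite ?eqxx ?orbT.
Qed.

Theorem theorem8 :
  exists (Sigma : finType) (M : safa Sigma),
    forall M' : safa Sigma,
      ~ (forall w : dword Sigma, lang M' w <-> rev_lang (lang M) w).
Proof.
exists bool, ab_safa => M' HM'.
pose l := iota 0 #|st M'|.
have : lang M' (map (pair false) l ++ map (pair true) l).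
  apply/HM'/lang_ab_safa; rewrite rev_cat -!map_rev.
  by apply: b_data_seen_blocks => d; rewrite cats0.
case/accepts_from_cat => c0 Hb Ha.
have [||x [y [z [El y0 Hxz]]]] := accepts_from_pump Ha.
- by rewrite -map_comp map_id iota_uniq.
- by rewrite size_map size_iota.
have /HM'/lang_ab_safa seen : lang M' (map (pair false) l ++ x ++ z).
  by apply/accepts_from_cat; exists c0.
case: y El y0 => [//|[a d] y] /(congr1 (map snd)) El _.
rewrite -map_comp map_id !map_cat /= in El.
have dl : d \in l by rewrite El mem_cat inE eqxx orbT.
have dxz : d \notin map snd x ++ map snd z.
  apply: (notin_uniq_cat_mid (s2 := d :: map snd y)).
    by rewrite -El iota_uniq.
  exact: mem_head.
move: (b_data_seen_mem (d := d) seen).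
rewrite !mem_rev !mem_cat (map_f (pair false) dl) /= => /(_ isT).
case/orP=> [/mapP[e _] // | /orP dxz'].
by move: dxz; rewrite mem_cat; case: dxz' => /(map_f snd) ->; rewrite ?orbT.
Qed.
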